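(* Let $A\in\mathbb{R}^{n\times n}$ be Metzler and let $E\in\mathbb{R}^{n\times q}$, $C\in\mathbb{R}^{q\times n}$, $F\in\mathbb{R}^{q\times q}$ be entrywise nonnegative. Let $q=q_1+\dots+q_N$ and $$\boldsymbol{\Delta}^{\infty}:=\{\Delta=\mathrm{diag}(\Delta_1,\ldots,\Delta_N):\ \Delta_i\in\mathbb{C}^{q_i\times q_i},\ \|\Delta_i\|_\infty\le 1\},\qquad \mathcal{D}_\Delta:=\{\mathrm{diag}(d_1I_{q_1},\ldots,d_NI_{q_N}):\ d_i>0\}.$$ Consider the uncertain system $\dot x=Ax+Ew$, $z=Cx+Fw$, $w=\Delta z$. The following statements are equivalent: (i) The uncertain system is asymptotically stable for all $\Delta\in\boldsymbol{\Delta}^{\infty}$. (ii) There exist a vector $\lambda\in\mathbb{R}^n_{>0}$ and a matrix $D\in\mathcal{D}_\Delta$ such that $$\begin{bmatrix}A & E\\ C & F-I_q\end{bmatrix}\begin{bmatrix}\lambda\\ D\mathbf{1}_q\end{bmatrix}<0 .$$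
   Context: A real matrix is Metzler if all its off-diagonal entries are nonnegative. $\|\cdot\|_\infty$ is the matrix norm induced by the vector $\infty$-norm. $\mathbf{1}_q$ is the vector of ones. Vector inequalities are componentwise. The uncertain system is asymptotically stable for a given $\Delta$ if $I-F\Delta$ is invertible and $A+E\Delta(I-F\Delta)^{-1}C$ is Hurwitz stable. *)

From mathcomp Require Import all_boot all_order all_algebra.
From mathcomp Require Import complex reals.
Set Implicit Arguments. Unset Strict Implicit. Unset Printing Implicit Defensive.
Import Order.TTheory GRing.Theory Num.Theory.
Local Open Scope ring_scope.

Definition cmod (R : realType) (z : R[i]) : R := complex.Re `|z|.

(* induced infinity norm (max absolute row sum) of a complex m x k matrix *)
Definition mxnorm_inf (R : realType) (m k : nat) (M : 'M[R[i]]_(m, k)) : R :=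
  \big[Num.max/0]_(r < m) \sum_(c < k) cmod (M r c).

Definition metzler (R : realType) (n : nat) (A : 'M[R]_n) : Prop :=
  forall i j : 'I_n, i != j -> 0 <= A i j.

Definition nonneg_mx (R : realType) (m k : nat) (M : 'M[R]_(m, k)) : Prop :=
  forall i j, 0 <= M i j.

Definition cmx (R : realType) (m k : nat) (M : 'M[R]_(m, k)) : 'M[R[i]]_(m, k) :=
  map_mx (fun x : R => (x%:C)%C) M.

Definition hurwitz (R : realType) (n : nat) (M : 'M[R[i]]_n) : Prop :=
  forall z : R[i], eigenvalue M z -> complex.Re z < 0.

Definition uss_stable (R : realType) (n q : nat) (A : 'M[R]_n) (E : 'M[R]_(n, q))
    (C : 'M[R]_(q, n)) (F : 'M[R]_q) (Delta : 'M[R[i]]_q) : Prop :=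
  (1%:M - cmx F *m Delta) \in unitmx /\
  hurwitz (cmx A + cmx E *m Delta *m invmx (1%:M - cmx F *m Delta) *m cmx C).

From mathcomp Require Import all_boot all_order all_algebra.
From mathcomp Require Import complex reals ring lra boolp classical_sets.
Set Implicit Arguments. Unset Strict Implicit. Unset Printing Implicit Defensive.
Import Order.TTheory GRing.Theory Num.Theory.
Local Open Scope ring_scope.

(* Sufficiency: (lam, d) defines a weighted max-norm in which every admissible
   Delta is nonexpansive and the loop z = C x + F Delta z is a strict contraction;
   at the row where |x_j| / lam_j is maximal, an eigenvector x of the closed loop
   gives a strictly dominant row, which forces Re mu < 0.
   Necessity: for a choice sg of one column per block, the real uncertainties
   theta * (block_ind * sel_mx sg), 0 < theta <= 1, reduce the loop to a Metzler
   matrix M_sg of size n + N, and robust stability makes mu - M_sg invertible for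
   all mu >= 0.  For a Metzler matrix this makes - M_sg inverse-nonnegative, so
   u_sg = - M_sg^-1 1 is positive.  Taking sg with maximal total mass of u_sg, a
   violated row of (ii) would let a switch of sg increase that mass. *)

Lemma mx_entryB (V : zmodType) a b (X Y : 'M[V]_(a, b)) i j :
  (X - Y) i j = X i j - Y i j.
Proof. by rewrite !mxE. Qed.

Section NonnegativeMatrices.
Variable R : realType.

Lemma nonneg_mulmx a b c (X : 'M[R]_(a, b)) (Y : 'M[R]_(b, c)) :
  nonneg_mx X -> nonneg_mx Y -> nonneg_mx (X *m Y).
Proof.
by move=> X_ge0 Y_ge0 i j; rewrite mxE; apply: sumr_ge0 => k _; apply: mulr_ge0.
Qed.

Lemma nonneg_mulmx_ge0 a b (M : 'M[R]_(a, b)) (v : 'cV[R]_b) i :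
  nonneg_mx M -> (forall j, 0 <= v j 0) -> 0 <= (M *m v) i 0.
Proof. by move=> M_ge0 v_ge0; apply: nonneg_mulmx => // j k; rewrite (ord1 k). Qed.

End NonnegativeMatrices.

Section ComplexModulus.
Variable R : realType.
Implicit Types (z w : R[i]) (x : R).

Lemma normc_cmod z : `|z| = ((cmod z)%:C)%C.
Proof. by rewrite /cmod normc_def. Qed.

Lemma cmod_ge0 z : 0 <= cmod z.
Proof. by rewrite /cmod normc_def /= sqrtr_ge0. Qed.

Lemma cmodD z w : cmod (z + w) <= cmod z + cmod w.
Proof. by have := ler_normD z w; rewrite !normc_cmod -rmorphD lecR. Qed.

Lemma cmodM z w : cmod (z * w) = cmod z * cmod w.
Proof. by apply: (@complexI R); rewrite rmorphM -!normc_cmod normrM. Qed.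

Lemma cmodR x : cmod ((x%:C)%C) = `|x|.
Proof. by rewrite /cmod normc_def /= expr0n /= addr0 sqrtr_sqr. Qed.

Lemma cmod0 : cmod (0 : R[i]) = 0.
Proof. by rewrite -(rmorph0 (real_complex R)) cmodR normr0. Qed.

Lemma cmod_eq0 z : cmod z = 0 -> z = 0.
Proof. by move=> h; apply/normr0_eq0; rewrite normc_cmod h. Qed.

Lemma Re_le_cmod z : complex.Re z <= cmod z.
Proof.
rewrite /cmod normc_def /=; apply: le_trans (ler_norm _) _.
by rewrite -sqrtr_sqr ler_wsqrtr // lerDl sqr_ge0.
Qed.

Lemma cmod_sum (I : finType) (P : pred I) (F : I -> R[i]) :
  cmod (\sum_(i | P i) F i) <= \sum_(i | P i) cmod (F i).
Proof.
have := ler_norm_sum (index_enum I) F P.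
by rewrite normc_cmod (eq_bigr _ (fun i _ => normc_cmod (F i))) -rmorph_sum lecR.
Qed.

End ComplexModulus.

Section BlockDiagonal.
Import tagnat.
Context {p : nat} {p_ : 'I_p -> nat}.

Lemma mxdiag_neq (V : nmodType) (B : forall i, 'M[V]_(p_ i)) s t :
  sig1 s != sig1 t -> (\mxdiag_i B i) s t = 0.
Proof. by move=> h; rewrite /mxdiag /mxblock mxE (negbTE h) mxE. Qed.

Lemma mxdiag_Rank (V : nmodType) (B : forall i, 'M[V]_(p_ i)) k (i j : 'I_(p_ k)) :
  (\mxdiag_i B i) (Rank k i) (Rank k j) = B k i j.
Proof.
rewrite /mxdiag /mxblock mxE /sig1 /sig2 /Rank.
by rewrite rankK /= rankK /= eqxx conform_mx_id.
Qed.

Lemma mxdiag_ind (P : 'I_(\sum_i p_ i) -> 'I_(\sum_i p_ i) -> Prop) :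
  (forall k (i j : 'I_(p_ k)), P (Rank k i) (Rank k j)) ->
  (forall s t, sig1 s != sig1 t -> P s t) -> forall s t, P s t.
Proof.
move=> in_block off_block s t.
case: (eqVneq (sig1 s) (sig1 t)) => [e|]; last exact: off_block.
rewrite -(sig2K s) -(sig2K t); move: (sig2 s) (sig2 t); rewrite e; exact: in_block.
Qed.

Lemma map_mxdiag (V W : nmodType) (f : V -> W) (B : forall i, 'M[V]_(p_ i)) :
  f 0 = 0 -> map_mx f (\mxdiag_i B i) = \mxdiag_i (map_mx f (B i)).
Proof.
move=> f0; apply/matrixP; apply: mxdiag_ind => [k i j|s t h].
  by rewrite mxE !mxdiag_Rank mxE.
by rewrite mxE !mxdiag_neq.
Qed.

Lemma mxdiag_mul_const (R : pzRingType) (B : forall i, 'M[R]_(p_ i)) (a : R) s :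
  ((\mxdiag_i B i) *m (const_mx a : 'cV_(\sum_i p_ i))) s 0
  = (B (sig1 s) *m (const_mx a : 'cV_(p_ (sig1 s)))) (sig2 s) 0.
Proof.
have -> : const_mx a = \mxcol_k (const_mx a : 'M[R]_(p_ k, 1)).
  by apply/matrixP => i j; rewrite !mxE.
by rewrite mul_mxdiag_mxcol mxE.
Qed.

Definition block_const (R : Type) (d : 'I_p -> R) : 'cV[R]_(\sum_i p_ i) :=
  \col_s d (sig1 s).

Lemma block_constE (R : Type) (d : 'I_p -> R) s : block_const d s 0 = d (sig1 s).
Proof. by rewrite mxE. Qed.

Lemma mxdiag_scalar_mul1 (R : pzRingType) (d : 'I_p -> R) :
  (\mxdiag_k ((d k)%:M : 'M[R]_(p_ k))) *m const_mx 1 = block_const d.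
Proof.
apply/matrixP => s j; rewrite (ord1 j) mxdiag_mul_const block_constE.
by rewrite mul_scalar_mx !mxE mulr1.
Qed.

Lemma sig2_ltS (s : 'I_(\sum_i p_ i)) : (sig2 s < (\sum_i p_ i).+1)%N.
Proof.
apply: (@leq_ltn_trans s); last by rewrite ltnS ltnW.
by rewrite [X in (_ <= X)%N]rect leq_addl.
Qed.

End BlockDiagonal.

Section MonotoneMatrices.
Variable R : realType.

Definition monotone_mx m (B : 'M[R]_m) :=
  forall u : 'cV[R]_m, (forall i, 0 <= (B *m u) i 0) -> forall i, 0 <= u i 0.

Lemma monotone_invmx_ge0 m (B : 'M[R]_m) :
  B \in unitmx -> monotone_mx B -> forall i j, 0 <= invmx B i j.
Proof.
move=> B_unit B_mono i j.
have -> : invmx B i j = (invmx B *m delta_mx j (0 : 'I_1)) i 0 by rewrite -colE mxE.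
by apply: B_mono => k; rewrite mulmxA mulmxV // mul1mx mxE ler0n.
Qed.

(* At an index minimising u_i / v_i the row (Z u)_i would be negative. *)
Lemma Zmatrix_monotone m (Z : 'M[R]_m) (v : 'cV[R]_m) :
  (forall i j, i != j -> Z i j <= 0) -> (forall i, 0 < v i 0) ->
  (forall i, 0 < (Z *m v) i 0) -> monotone_mx Z.
Proof.
move=> Zoff v_gt0 Zv_gt0 u Zu_ge0 i; rewrite leNgt; apply/negP => ui_lt0.
case: (@arg_minP _ _ _ i predT (fun j => u j 0 / v j 0)) => // i0 _ u_min.
set t := u i0 0 / v i0 0 in u_min.
have t_lt0 : t < 0.
  by apply: le_lt_trans (u_min i isT) _; rewrite ltr_pdivrMr // mul0r.
have tv_le j : t * v j 0 <= u j 0 by rewrite -ler_pdivlMr //; exact: u_min.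
have ui0 : u i0 0 = t * v i0 0 by rewrite /t divfK // gt_eqF.
have : (Z *m u) i0 0 <= t * (Z *m v) i0 0.
  rewrite !mxE mulr_sumr; apply: ler_sum => j _; rewrite mulrCA.
  case: (eqVneq j i0) => [->|ne]; first by rewrite ui0 mulrCA.
  by apply: ler_wnM2l; [apply: Zoff; rewrite eq_sym | exact: tv_le].
have := Zu_ge0 i0; have := Zv_gt0 i0; move: ((Z *m u) i0 0) ((Z *m v) i0 0).
move=> a b b_gt0 a_ge0 ab; nra.
Qed.

Section Metzler.
Variables (m : nat) (M : 'M[R]_m).
Hypothesis M_metzler : metzler M.

Lemma monotone_shift_rowsum mu :
  (forall i, \sum_j M i j < mu) -> monotone_mx (mu%:M - M).
Proof.
move=> rowsum_lt; apply: (Zmatrix_monotone (v := const_mx 1)).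
- by move=> i j ij; rewrite !mxE (negbTE ij) mulr0n sub0r oppr_le0 M_metzler.
- by move=> i; rewrite mxE ltr01.
- move=> i; rewrite mulmxBl mul_scalar_mx !mxE subr_gt0 mulr1.
  by apply: le_lt_trans (rowsum_lt i); apply: ler_sum => j _; rewrite mxE mulr1.
Qed.

(* (mu - t) - M = (mu - M) (1 - t Y) with Y = (mu - M)^-1 >= 0, and the Z-matrix
   1 - t Y is monotone because it maps the all-ones vector to a positive one. *)
Lemma monotone_shift_sub mu t :
  (mu%:M - M) \in unitmx -> (forall i j, 0 <= invmx (mu%:M - M) i j) -> 0 <= t ->
  (forall i, t * \sum_j invmx (mu%:M - M) i j < 1) -> monotone_mx ((mu - t)%:M - M).
Proof.
move=> U Y_ge0 t_ge0 small u hu.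
set Y := invmx (mu%:M - M) in Y_ge0 small.
have e : (1%:M - t *: Y) *m u = Y *m (((mu - t)%:M - M) *m u).
  rewrite (raddfB (@scalar_mx R m)) addrAC mulmxBl mul1mx -scalemxAl.
  rewrite (mulmxBl (mu%:M - M)).
  by rewrite mulmxBr mulmxA mulVmx // mul1mx mul_scalar_mx scalemxAr.
apply: (Zmatrix_monotone (Z := 1%:M - t *: Y) (v := const_mx 1)).
- move=> i j ij; rewrite !mxE (negbTE ij) mulr0n sub0r oppr_le0.
  exact: mulr_ge0.
- by move=> i; rewrite mxE ltr01.
- move=> i; rewrite mulmxBl mul1mx !mxE subr_gt0.
  apply: le_lt_trans (small i); rewrite mulr_sumr; apply: ler_sum => j _.
  by rewrite !mxE mulr1.
- move=> i; rewrite e mxE; apply: sumr_ge0 => j _; exact: mulr_ge0.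
Qed.

(* The resolvent identity Y1 = Ys + s Y1 Ys, read on the maximal row sum of Ys. *)
Lemma resolvent_rowsum_le mu s c :
  0 <= s -> (mu%:M - M) \in unitmx -> ((mu + s)%:M - M) \in unitmx ->
  (forall i j, 0 <= invmx ((mu + s)%:M - M) i j) ->
  (forall i, \sum_j `|invmx (mu%:M - M) i j| <= c) -> s * c <= 2^-1 ->
  forall i, \sum_j invmx ((mu + s)%:M - M) i j <= 2 * c.
Proof.
move=> s_ge0 U1 U2 Ys_ge0 c_bound sc.
set Y1 := invmx (mu%:M - M) in c_bound *.
set Ys := invmx ((mu + s)%:M - M) in Ys_ge0 *.
have resolvent : Y1 = Ys + s *: (Y1 *m Ys).
  have : Y1 *m ((mu + s)%:M - M) *m Ys = Y1 by rewrite -mulmxA mulmxV // mulmx1.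
  rewrite (_ : (mu + s)%:M - M = (mu%:M - M) + s%:M); last first.
    by rewrite raddfD /= addrAC.
  by rewrite mulmxDr mulVmx // mul_mx_scalar mulmxDl mul1mx -scalemxAl => ->.
pose w i := \sum_j Ys i j.
have w_ge0 i : 0 <= w i by apply: sumr_ge0 => j _.
have ew i : w i = \sum_j Y1 i j - s * \sum_j Y1 i j * w j.
  have -> : \sum_j Y1 i j = \sum_j (Ys i j + s * \sum_k Y1 i k * Ys k j).
    by apply: eq_bigr => j _; rewrite {1}resolvent !mxE.
  rewrite big_split /= -mulr_sumr exchange_big /=.
  rewrite (_ : \sum_j Y1 i j * w j = \sum_j \sum_k Y1 i j * Ys j k).
    by rewrite /w addrK.
  by apply: eq_bigr => j _; rewrite /w mulr_sumr.
move=> i; case: (@arg_maxP _ _ _ i predT w) => // i1 _ w_max.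
apply: le_trans (w_max i isT) _.
have h1 : `|\sum_j Y1 i1 j| <= c by apply: le_trans (ler_norm_sum _ _ _) (c_bound i1).
have h2 : `|\sum_j Y1 i1 j * w j| <= c * w i1.
  apply: le_trans (ler_norm_sum _ _ _) _.
  apply: le_trans (_ : \sum_j `|Y1 i1 j| * w i1 <= _); last first.
    by rewrite -mulr_suml ler_wpM2r.
  apply: ler_sum => j _; rewrite normrM (ger0_norm (w_ge0 j)).
  by apply: ler_wpM2l => //; exact: w_max.
have h3 : w i1 <= c + s * (c * w i1).
  rewrite {1}ew; apply: le_trans (ler_norm _) _.
  apply: le_trans (ler_normB _ _) _; apply: lerD => //.
  by rewrite normrM (ger0_norm s_ge0); apply: ler_wpM2l.
have c_ge0 : 0 <= c by apply: le_trans (c_bound i1); apply: sumr_ge0.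
have := w_ge0 i1; move: (w i1) h3 => x h3 x_ge0; nra.
Qed.

Lemma monotone_shift_down mu s c :
  0 < s -> (mu%:M - M) \in unitmx -> ((mu + s)%:M - M) \in unitmx ->
  (forall i, \sum_j `|invmx (mu%:M - M) i j| <= c) -> s * c <= 4^-1 ->
  monotone_mx ((mu + s)%:M - M) -> forall y, mu - s < y <= mu + s ->
  monotone_mx (y%:M - M).
Proof.
move=> s_gt0 U1 U2 c_bound sc mono y /andP [y_gt y_le].
have Ys_ge0 := monotone_invmx_ge0 U2 mono.
have rowsum := resolvent_rowsum_le (ltW s_gt0) U1 U2 Ys_ge0 c_bound.
have -> : y = (mu + s) - (mu + s - y) by rewrite opprB addrC subrK.
apply: monotone_shift_sub => //; first by rewrite subr_ge0.
move=> i; have c_ge0 : 0 <= c by apply: le_trans (c_bound i); apply: sumr_ge0.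
apply: le_lt_trans (_ : (mu + s - y) * (2 * c) < 1).
  apply: ler_wpM2l; first by rewrite subr_ge0.
  by apply: rowsum; apply: le_trans sc _; rewrite lef_pV2 ?posrE // ler_nat.
have : (mu + s - y) * (2 * c) <= 2 * s * (2 * c) by apply: ler_wpM2r; lra.
have : 4 * (s * c) <= 1 by rewrite -ler_pdivlMl ?ltr0n // mulr1.
nra.
Qed.

Lemma metzler_mul_lt0_pos (v : 'cV[R]_m) i :
  (forall j, 0 <= v j 0) -> (M *m v) i 0 < 0 -> 0 < v i 0.
Proof.
move=> v_ge0 Mv_lt0; rewrite lt_neqAle v_ge0 andbT; apply/negP => /eqP vi0.
move: Mv_lt0; rewrite mxE (bigD1 i) //= -vi0 mulr0 add0r ltNge; apply/negP/negPn.
by apply: sumr_ge0 => j ji; apply: mulr_ge0 => //; apply: M_metzler; rewrite eq_sym.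
Qed.

(* mu - M is monotone beyond the row sums of M, and monotonicity at ms + s passes
   down to ]ms - s, ms + s] for s small w.r.t. the resolvent at ms: so the set of
   mu >= 0 where monotonicity fails cannot have a supremum ms. *)
Lemma metzler_monotone_opp :
  (forall mu, 0 <= mu -> (mu%:M - M) \in unitmx) -> monotone_mx (- M).
Proof.
move=> shift_unit; have -> : - M = 0%:M - M by rewrite raddf0 sub0r.
case: (pselect (monotone_mx (0%:M - M))) => // not_mono0.
pose S := fun mu : R => 0 <= mu /\ ~ monotone_mx (mu%:M - M).
pose rho := \sum_i \sum_j `|M i j|.
have S_le_rho mu : S mu -> mu <= rho.
  case=> _ not_mono; rewrite leNgt; apply/negP => rho_lt; apply: not_mono.
  apply: monotone_shift_rowsum => i; apply: le_lt_trans rho_lt.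
  apply: le_trans (_ : \sum_j `|M i j| <= _).
    by apply: ler_sum => j _; exact: ler_norm.
  rewrite /rho [X in _ <= X](bigD1 i) //= lerDl.
  by apply: sumr_ge0 => k _; apply: sumr_ge0.
have S0 : S 0 by [].
have S_sup : has_sup S by split; [exists 0 | exists rho => x; exact: S_le_rho].
set ms := sup S.
have le_ms mu : S mu -> mu <= ms by move=> Smu; apply: sup_upper_bound.
have ms_ge0 : 0 <= ms := le_ms 0 S0.
pose c := 1 + \sum_i \sum_j `|invmx (ms%:M - M) i j|.
have c_bound i : \sum_j `|invmx (ms%:M - M) i j| <= c.
  rewrite /c [in X in _ <= X](bigD1 i) //= addrCA lerDl addr_ge0 //.
  by apply: sumr_ge0 => k _; apply: sumr_ge0.
have c_gt0 : 0 < c by rewrite ltr_wpDr // sumr_ge0 // => k _; apply: sumr_ge0.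
pose s := (4 * c)^-1.
have s_gt0 : 0 < s by rewrite invr_gt0 mulr_gt0.
have sc : s * c <= 4^-1 by rewrite /s invfM -mulrA mulVf ?mulr1 // gt_eqF.
have mono_above : monotone_mx ((ms + s)%:M - M).
  case: (pselect (monotone_mx ((ms + s)%:M - M))) => // not_mono.
  have : S (ms + s) by split => //; apply: addr_ge0 => //; apply: ltW.
  by move/le_ms; rewrite gerDl leNgt s_gt0.
have [y Sy y_gt] : exists2 y, S y & ms - s < y.
  by apply: sup_gt; [exists 0 | rewrite ltrBlDr ltrDl].
have y_le := le_ms y Sy; case: Sy => _ [].
apply: (monotone_shift_down s_gt0 _ _ c_bound) => //.
- exact: shift_unit.
- by apply: shift_unit; rewrite addr_ge0 // ltW.
- by rewrite y_gt /= (le_trans y_le) // lerDl ltW.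
Qed.
End Metzler.
End MonotoneMatrices.

Section ClosedLoop.
Variable K : fieldType.

Lemma unitmxPn m (B : 'M[K]_m) :
  reflect (exists2 x : 'cV[K]_m, x != 0 & B *m x = 0) (B \notin unitmx).
Proof.
apply: (iffP idP) => [|[x x_neq0 Bx0]].
  rewrite unitmxE unitfE negbK -det_tr => /det0P [v v_neq0 vB0].
  exists v^T; last by apply: trmx_inj; rewrite trmx_mul trmxK vB0 trmx0.
  by apply: contra v_neq0 => /eqP v0; rewrite -[v]trmxK v0 trmx0.
by apply/negP => B_unit; move: x_neq0; rewrite -(mulKmx B_unit x) Bx0 mulmx0 eqxx.
Qed.

Lemma eigenvalue_colP m (B : 'M[K]_m) a :
  eigenvalue B a <-> exists2 x : 'cV[K]_m, x != 0 & B *m x = a *: x.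
Proof.
have eqBa x : ((B - a%:M) *m x == 0) = (B *m x == a *: x).
  by rewrite mulmxBl mul_scalar_mx subr_eq0.
rewrite /eigenvalue /eigenspace kermx_eq0 row_free_unit; split.
  by move=> /unitmxPn [x x_neq0 /eqP]; rewrite eqBa => /eqP; exists x.
by move=> [x x_neq0 /eqP]; rewrite -eqBa => /eqP Bx; apply/unitmxPn; exists x.
Qed.

Lemma closed_loop_eigenvalueP n q (A : 'M[K]_n) (E : 'M[K]_(n, q))
    (C : 'M[K]_(q, n)) (F D : 'M[K]_q) mu :
  (1%:M - F *m D) \in unitmx ->
  eigenvalue (A + E *m D *m invmx (1%:M - F *m D) *m C) mu <->
  exists (x : 'cV_n) (z : 'cV_q), [/\ x != 0, z = C *m x + F *m (D *m z)
                & A *m x + E *m (D *m z) = mu *: x].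
Proof.
set L := 1%:M - F *m D => L_unit.
have loopP (x : 'cV_n) z : z = C *m x + F *m (D *m z) <-> z = invmx L *m (C *m x).
  split=> [ez | ->].
    have Lz : L *m z = C *m x by rewrite mulmxBl mul1mx -mulmxA {1}ez addrK.
    by rewrite -Lz mulKmx.
  set y := invmx L *m _; have Ly : L *m y = C *m x by rewrite mulKVmx.
  by rewrite -Ly mulmxBl mul1mx -mulmxA subrK.
rewrite eigenvalue_colP; split=> [[x x_neq0 hx] | [x [z [x_neq0 /loopP ez hx]]]].
  exists x, (invmx L *m (C *m x)); split=> //; first exact/loopP.
  by rewrite -hx mulmxDl !mulmxA.
by exists x => //; rewrite mulmxDl -hx ez !mulmxA.
Qed.

End ClosedLoop.

Section RealToComplex.
Variable R : realType.

Lemma cmxE a b (X : 'M[R]_(a, b)) : cmx X = map_mx (real_complex R) X.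
Proof. by []. Qed.

Lemma cmxM a b c (X : 'M[R]_(a, b)) (Y : 'M[R]_(b, c)) : cmx (X *m Y) = cmx X *m cmx Y.
Proof. by rewrite !cmxE map_mxM. Qed.

Lemma cmxD a b (X Y : 'M[R]_(a, b)) : cmx (X + Y) = cmx X + cmx Y.
Proof. by rewrite !cmxE map_mxD. Qed.

Lemma cmx0 a b : cmx (0 : 'M[R]_(a, b)) = 0.
Proof. by rewrite cmxE map_mx0. Qed.

Lemma cmxZ a b (r : R) (X : 'M[R]_(a, b)) : cmx (r *: X) = (r%:C)%C *: cmx X.
Proof. by rewrite !cmxE map_mxZ. Qed.

Lemma cmx_inj a b : injective (@cmx R a b).
Proof.
move=> X Y /matrixP eqXY; apply/matrixP => i j.
by move: (eqXY i j); rewrite !mxE => -[].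
Qed.

Lemma cmod_nonneg_sum_le b (P : pred 'I_b) (a v : 'I_b -> R) (x : 'I_b -> R[i]) t :
  (forall j, P j -> 0 <= a j) -> (forall j, P j -> cmod (x j) <= t * v j) ->
  cmod (\sum_(j | P j) ((a j)%:C)%C * x j) <= t * \sum_(j | P j) a j * v j.
Proof.
move=> a_ge0 x_le; apply: le_trans (cmod_sum _ _) _; rewrite mulr_sumr.
apply: ler_sum => j Pj; rewrite cmodM cmodR ger0_norm ?a_ge0 // mulrCA.
by apply: ler_wpM2l; [exact: a_ge0 | exact: x_le].
Qed.

Lemma cmx_mul_cmod_le a b (M : 'M[R]_(a, b)) (x : 'cV[R[i]]_b) (v : 'cV[R]_b) t i :
  nonneg_mx M -> (forall j, cmod (x j 0) <= t * v j 0) ->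
  cmod ((cmx M *m x) i 0) <= t * (M *m v) i 0.
Proof.
move=> M_ge0 x_le; rewrite !mxE (eq_bigr (fun j => ((M i j)%:C)%C * x j 0)).
  by apply: cmod_nonneg_sum_le => j _; [exact: M_ge0 | exact: x_le].
by move=> j _; rewrite mxE.
Qed.

Lemma cmod_weighted_argmax m (x : 'cV[R[i]]_m) (v : 'cV[R]_m) (i0 : 'I_m) :
  (forall j, 0 < v j 0) ->
  exists j0, forall j, cmod (x j 0) <= cmod (x j0 0) / v j0 0 * v j 0.
Proof.
move=> v_gt0; case: (@arg_maxP _ _ _ i0 predT (fun j => cmod (x j 0) / v j 0)) => //.
by move=> j0 _ x_max; exists j0 => j; rewrite -ler_pdivrMr //; exact: x_max.
Qed.

End RealToComplex.

Section WeightedMaxNorm.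
Variable R : realType.

Definition nonexpansive_wrt q (w : 'cV[R]_q) (D : 'M[R[i]]_q) :=
  forall s, \sum_t cmod (D s t) * w t 0 <= w s 0.

Lemma nonexpansive_mul_le q (w : 'cV[R]_q) D (z : 'cV[R[i]]_q) u :
  nonexpansive_wrt w D -> 0 <= u -> (forall t, cmod (z t 0) <= u * w t 0) ->
  forall s, cmod ((D *m z) s 0) <= u * w s 0.
Proof.
move=> D_ne u_ge0 z_le s; rewrite mxE; apply: le_trans (cmod_sum _ _) _.
apply: le_trans (_ : \sum_t cmod (D s t) * (u * w t 0) <= _).
  by apply: ler_sum => t _; rewrite cmodM ler_wpM2l ?cmod_ge0.
rewrite (eq_bigr (fun t => u * (cmod (D s t) * w t 0))) => [|t _]; last exact: mulrCA.
by rewrite -mulr_sumr ler_wpM2l.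
Qed.

Lemma mxdiag_nonexpansive N (qs : 'I_N -> nat) (Db : forall k, 'M[R[i]]_(qs k))
    (d : 'I_N -> R) :
  (forall k, mxnorm_inf (Db k) <= 1) -> (forall k, 0 <= d k) ->
  nonexpansive_wrt (block_const d) (\mxdiag_k Db k).
Proof.
move=> Db_le1 d_ge0 s; rewrite block_constE.
set k := tagnat.sig1 s.
have -> : \sum_t cmod ((\mxdiag_k Db k) s t) * block_const d t 0
        = d k * \sum_t cmod ((\mxdiag_k Db k) s t) * 1.
  rewrite mulr_sumr; apply: eq_bigr => t _; rewrite block_constE mulr1.
  case: (eqVneq k (tagnat.sig1 t)) => [->|ne]; first by rewrite mulrC.
  by rewrite mxdiag_neq // cmod0 mul0r mulr0.
rewrite -[X in _ <= X]mulr1 ler_wpM2l //.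
have -> : \sum_t cmod ((\mxdiag_k Db k) s t) * 1
        = (map_mx (@cmod R) (\mxdiag_k Db k) *m (const_mx 1 : 'cV_(\sum_k qs k))) s 0.
  by rewrite mxE; apply: eq_bigr => t _; rewrite !mxE.
rewrite map_mxdiag ?cmod0 // mxdiag_mul_const mxE.
apply: le_trans (Db_le1 k); apply: le_trans (le_bigmax _ _ (tagnat.sig2 s)).
by apply: ler_sum => c _; rewrite !mxE mulr1.
Qed.

(* Read the loop equation at the row where |z_s| / w_s is maximal. *)
Lemma loop_weighted_le n q (C : 'M[R]_(q, n)) (F : 'M[R]_q) (D : 'M[R[i]]_q)
    (lam : 'cV[R]_n) (w : 'cV[R]_q) (x : 'cV[R[i]]_n) (z : 'cV[R[i]]_q) t :
  nonneg_mx C -> nonneg_mx F -> nonexpansive_wrt w D -> (forall s, 0 < w s 0) ->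
  (forall s, (C *m lam + F *m w) s 0 < w s 0) -> (forall j, 0 <= lam j 0) ->
  0 <= t -> (forall j, cmod (x j 0) <= t * lam j 0) ->
  z = cmx C *m x + cmx F *m (D *m z) -> forall s, cmod (z s 0) <= t * w s 0.
Proof.
move=> C_ge0 F_ge0 D_ne w_gt0 dom lam_ge0 t_ge0 x_le ez s.
have [s0 z_le] := cmod_weighted_argmax z s w_gt0.
set u := cmod (z s0 0) / w s0 0 in z_le.
have u_ge0 : 0 <= u by rewrite divr_ge0 ?cmod_ge0 ?ltW.
have z_s0 : cmod (z s0 0) = u * w s0 0 by rewrite /u divfK ?gt_eqF.
have key : u * w s0 0 <= t * (C *m lam) s0 0 + u * (F *m w) s0 0.
  rewrite -z_s0 {1}ez mxE; apply: le_trans (cmodD _ _) _; apply: lerD.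
    exact: cmx_mul_cmod_le.
  by apply: cmx_mul_cmod_le => // j; exact: nonexpansive_mul_le.
have u_le_t : u <= t.
  have := dom s0; rewrite mxE.
  have := nonneg_mulmx_ge0 s0 C_ge0 lam_ge0.
  have := nonneg_mulmx_ge0 s0 F_ge0 (fun j => ltW (w_gt0 j)).
  have := w_gt0 s0; move: key; move: (w s0 0) ((C *m lam) s0 0) ((F *m w) s0 0).
  move=> W a b key W_gt0 b_ge0 a_ge0 lt_W; nra.
by apply: le_trans (z_le s) _; rewrite ler_pM2r.
Qed.

(* In row j0, where |x_j| / lam_j is maximal, |mu - A_j0j0| |x_j0| is bounded by
   the off-diagonal part of the row, so Re mu >= 0 would contradict the dominance
   of lam. *)
Lemma eigen_Re_lt0_of_dominance n q (A : 'M[R]_n) (E : 'M[R]_(n, q))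
    (lam : 'cV[R]_n) (w : 'cV[R]_q) (x : 'cV[R[i]]_n) (v : 'cV[R[i]]_q) mu t j0 :
  metzler A -> nonneg_mx E -> (forall j, (A *m lam + E *m w) j 0 < 0) -> 0 < t ->
  (forall j, cmod (x j 0) <= t * lam j 0) -> cmod (x j0 0) = t * lam j0 0 ->
  (forall s, cmod (v s 0) <= t * w s 0) ->
  cmx A *m x + cmx E *m v = mu *: x -> complex.Re mu < 0.
Proof.
move=> A_metzler E_ge0 dom t_gt0 x_le x_j0 v_le eigen.
rewrite ltNge; apply/negP => Re_ge0.
set a := A j0 j0; set P := \sum_(l | l != j0) A j0 l * lam l 0.
have row : (mu - (a%:C)%C) * x j0 0 =
    \sum_(l | l != j0) ((A j0 l)%:C)%C * x l 0 + (cmx E *m v) j0 0.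
  move/matrixP: eigen => /(_ j0 0); rewrite !mxE (bigD1 j0) //= mxE.
  under eq_bigr do rewrite mxE.
  by move=> h; rewrite mulrBl -h /a; ring.
have bound : cmod (mu - (a%:C)%C) * (t * lam j0 0) <= t * P + t * (E *m w) j0 0.
  rewrite -x_j0 -cmodM row; apply: le_trans (cmodD _ _) _; apply: lerD.
    apply: cmod_nonneg_sum_le => l l_neq; last exact: x_le.
    by apply: A_metzler; rewrite eq_sym.
  exact: cmx_mul_cmod_le.
have Re_bound : - a <= cmod (mu - (a%:C)%C).
  by apply: le_trans (Re_le_cmod _); rewrite raddfB /= lerBrDr addrC subrr.
have row_neg : a * lam j0 0 + P + (E *m w) j0 0 < 0.
  by have := dom j0; rewrite mxE [in X in X + _]mxE (bigD1 j0).
have tl_ge0 : 0 <= t * lam j0 0 by rewrite -x_j0 cmod_ge0.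
move: bound Re_bound row_neg tl_ge0 t_gt0.
move: (cmod _) (lam j0 0) ((E *m w) j0 0) => cm l e; nra.
Qed.

Lemma uss_stable_of_weights n q (A : 'M[R]_n) (E : 'M[R]_(n, q)) (C : 'M[R]_(q, n))
    (F : 'M[R]_q) (D : 'M[R[i]]_q) (lam : 'cV[R]_n) (w : 'cV[R]_q) :
  metzler A -> nonneg_mx E -> nonneg_mx C -> nonneg_mx F ->
  (forall j, 0 < lam j 0) -> (forall s, 0 < w s 0) ->
  (forall j, (A *m lam + E *m w) j 0 < 0) ->
  (forall s, (C *m lam + F *m w) s 0 < w s 0) ->
  nonexpansive_wrt w D -> uss_stable A E C F D.
Proof.
move=> A_metzler E_ge0 C_ge0 F_ge0 lam_gt0 w_gt0 Adom Cdom D_ne.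
have z_le := loop_weighted_le C_ge0 F_ge0 D_ne w_gt0 Cdom (fun j => ltW (lam_gt0 j)).
have loop_unit : (1%:M - cmx F *m D) \in unitmx.
  case: (boolP (_ \in unitmx)) => // /unitmxPn [z z_neq0 Lz0]; case/eqP: z_neq0.
  have ez : z = cmx C *m 0 + cmx F *m (D *m z).
    by move/eqP: Lz0; rewrite mulmxBl mul1mx subr_eq0 mulmx0 add0r mulmxA => /eqP.
  apply/matrixP => s j; rewrite (ord1 j) mxE; apply: cmod_eq0; apply/le_anti.
  rewrite cmod_ge0 andbT -(mul0r (w s 0)); apply: z_le ez s => // l.
  by rewrite mxE cmod0 mul0r.
split=> // mu /(closed_loop_eigenvalueP _ _ _ _ loop_unit) [x [z [x_neq0 ez eigen]]].
have [j1 x_j1] : exists j1, x j1 0 != 0.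
  apply/existsP; move: x_neq0; apply: contraNT => /existsPn x0.
  by apply/eqP/matrixP => j k; rewrite (ord1 k) mxE; apply/eqP/negPn/x0.
have [j0 x_le] := cmod_weighted_argmax x j1 lam_gt0.
set t := cmod (x j0 0) / lam j0 0 in x_le.
have t_gt0 : 0 < t.
  have : 0 < t * lam j1 0.
    apply: lt_le_trans (x_le j1); rewrite lt_neqAle cmod_ge0 andbT eq_sym.
    by apply: contra x_j1 => /eqP /cmod_eq0 ->.
  by rewrite pmulr_lgt0.
apply: (eigen_Re_lt0_of_dominance (j0 := j0) A_metzler E_ge0 Adom t_gt0 x_le _ _ eigen).
  by rewrite /t divfK ?gt_eqF.
apply: nonexpansive_mul_le (ltW t_gt0) _ => //.
exact: z_le (ltW t_gt0) x_le ez.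
Qed.

End WeightedMaxNorm.

Section BlockStructure.
Variables (R : realType) (n N : nat) (qs : 'I_N -> nat).
Local Notation q := (\sum_(k < N) qs k)%N.
Variables (A : 'M[R]_n) (E : 'M[R]_(n, q)) (C : 'M[R]_(q, n)) (F : 'M[R]_q).
Hypotheses (A_metzler : metzler A) (E_ge0 : nonneg_mx E) (C_ge0 : nonneg_mx C)
  (F_ge0 : nonneg_mx F).

Lemma lmi_rowsP (lam : 'cV[R]_n) (d : 'I_N -> R) :
  (forall r, (block_mx A E C (F - 1%:M) *m
              col_mx lam ((\mxdiag_(k < N) ((d k)%:M : 'M[R]_(qs k))) *m const_mx 1))
             r 0 < 0) <->
  (forall j, (A *m lam + E *m block_const d) j 0 < 0) /\
  (forall s, (C *m lam + F *m block_const d) s 0 < block_const d s 0).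
Proof.
rewrite mxdiag_scalar_mul1 mul_block_col mulmxBl mul1mx addrA.
split=> [rows | [upper lower] r].
  split=> [j | s]; [have := rows (lshift q j) | have := rows (rshift n s)].
    by rewrite col_mxEu.
  by rewrite col_mxEd mx_entryB subr_lt0.
by case: (split_ordP r) => j ->; rewrite ?col_mxEu ?col_mxEd ?mx_entryB ?subr_lt0.
Qed.

Definition block_ind : 'M[R]_(q, N) := \matrix_(s, k) (tagnat.sig1 s == k)%:R.

Lemma block_ind_mul (v : 'cV[R]_N) : block_ind *m v = block_const (fun k => v k 0).
Proof.
apply/matrixP => s j; rewrite (ord1 j) block_constE mxE (bigD1 (tagnat.sig1 s)) //=.
rewrite mxE eqxx mul1r big1 ?addr0 // => k k_neq.
by rewrite mxE eq_sym (negbTE k_neq) mul0r.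
Qed.

(* A selection sg picks the column sg k in block k; values sg k >= qs k pick none. *)
Local Notation selection := {ffun 'I_N -> 'I_q.+1}.

Definition sel_mx (sg : selection) : 'M[R]_(N, q) :=
  \matrix_(k, s) ((tagnat.sig1 s == k) && (tagnat.sig2 s == sg k :> nat))%:R.

Definition sel_blk (sg : selection) k : 'M[R]_(qs k) :=
  \matrix_(i, j) (j == sg k :> nat)%:R.

Lemma mxdiag_sel_blk sg (th : R) :
  \mxdiag_k (th *: sel_blk sg k) = th *: (block_ind *m sel_mx sg).
Proof.
apply/matrixP; apply: mxdiag_ind => [k i j | s t neq_st].
  rewrite mxdiag_Rank !mxE; congr (_ * _).
  rewrite [RHS](eq_bigr (fun k' =>
    (k == k')%:R * ((k == k') && (j == sg k' :> nat))%:R));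
    last by move=> k' _; rewrite !mxE tagnat.Rank1K tagnat.Rank2K /= tagnat.Rank1K.
  rewrite [RHS](bigD1 k) //= eqxx mul1r [X in _ + X]big1 ?addr0 // => k' k'_neq.
  by rewrite eq_sym (negbTE k'_neq) mul0r.
rewrite mxdiag_neq // !mxE big1 ?mulr0 // => k _; rewrite !mxE.
by case: eqP => [<-|_]; [rewrite eq_sym (negbTE neq_st) mulr0 | rewrite mul0r].
Qed.

Lemma mxnorm_inf_sel_blk sg (th : R) k :
  0 <= th <= 1 -> mxnorm_inf (cmx (th *: sel_blk sg k)) <= 1.
Proof.
case/andP=> th_ge0 th_le1; apply: bigmax_le => // r _.
have -> : \sum_c cmod (cmx (th *: sel_blk sg k) r c)
        = th * \sum_(c < qs k) (c == sg k :> nat)%:R.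
  by rewrite mulr_sumr; apply: eq_bigr => c _; rewrite !mxE cmodR ger0_norm ?mulr_ge0.
apply: le_trans th_le1; rewrite -[X in _ <= X]mulr1 ler_wpM2l //.
case: (ltnP (sg k) (qs k)) => [lt_sg|le_sg]; last first.
  rewrite big1 // => c _; case: eqP => // eq_c.
  by move: (ltn_ord c); rewrite eq_c ltnNge le_sg.
rewrite (bigD1 (Ordinal lt_sg)) //= eqxx big1 ?addr0 // => c c_neq.
by case: eqP => // eq_c; case/eqP: c_neq; apply: val_inj.
Qed.

Lemma sel_mx_mul_sel (sg : selection) (v : 'cV[R]_q) s :
  tagnat.sig2 s = sg (tagnat.sig1 s) :> nat ->
  (sel_mx sg *m v) (tagnat.sig1 s) 0 = v s 0.
Proof.
move=> sel_s; rewrite mxE (bigD1 s) //= mxE sel_s !eqxx mul1r.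
rewrite [X in _ + X]big1 ?addr0 // => t t_neq; rewrite mxE.
case: andP => [[/eqP e1 /eqP e2]|]; last by rewrite mul0r.
case/eqP: t_neq; rewrite -(tagnat.sig2K t) -(tagnat.sig2K s); apply: val_inj; apply/eqP.
by rewrite tagnat.eq_Rank e2 sel_s e1 !eqxx.
Qed.

Lemma sel_mx_mul_eq (sg sg' : selection) (v : 'cV[R]_q) k :
  sg' k = sg k -> (sel_mx sg' *m v) k 0 = (sel_mx sg *m v) k 0.
Proof. by move=> e; rewrite !mxE; apply: eq_bigr => t _; rewrite !mxE e. Qed.

Definition reduced_mx (sg : selection) : 'M[R]_(n + N) :=
  block_mx A (E *m block_ind) (sel_mx sg *m C) (sel_mx sg *m F *m block_ind - 1%:M).

Lemma reduced_mx_mul (sg : selection) (l : 'cV[R]_n) (v : 'cV[R]_N) :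
  reduced_mx sg *m col_mx l v =
  col_mx (A *m l + E *m (block_ind *m v))
         (sel_mx sg *m (C *m l + F *m (block_ind *m v)) - v).
Proof. by rewrite mul_block_col !mulmxA mulmxBl mul1mx mulmxDr !mulmxA addrA. Qed.

Lemma reduced_mx_metzler (sg : selection) : metzler (reduced_mx sg).
Proof.
have S_ge0 : nonneg_mx block_ind by move=> i j; rewrite mxE ler0n.
have P_ge0 : nonneg_mx (sel_mx sg) by move=> i j; rewrite mxE ler0n.
move=> i j; case: (split_ordP i) => {}i ->; case: (split_ordP j) => {}j -> neq.
- by rewrite block_mxEul A_metzler //; apply: contra neq => /eqP ->.
- by rewrite block_mxEur nonneg_mulmx.
- by rewrite block_mxEdl nonneg_mulmx.
have /negbTE i_neq_j : i != j by apply: contra neq => /eqP ->.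
rewrite block_mxEdr mx_entryB [1%:M i j]mxE i_neq_j mulr0n subr0.
by apply: nonneg_mulmx => //; apply: nonneg_mulmx.
Qed.

Section Necessity.
Hypothesis robustly_stable : forall Db : forall k : 'I_N, 'M[R[i]]_(qs k),
  (forall k, mxnorm_inf (Db k) <= 1) -> uss_stable A E C F (\mxdiag_(k < N) Db k).

(* An eigenvector (x, y) of the reduced matrix for mu >= 0 would give, with the real
   uncertainty Delta = (1 + mu)^-1 block_ind sel_mx, either a singular loop or an
   unstable closed loop. *)
Lemma reduced_shift_unit sg mu : 0 <= mu -> (mu%:M - reduced_mx sg) \in unitmx.
Proof.
move=> mu_ge0; case: (boolP (_ \in unitmx)) => // /unitmxPn [u u_neq0 ker_u].
exfalso; have : reduced_mx sg *m u = mu *: u.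
  by move/eqP: ker_u; rewrite mulmxBl mul_scalar_mx subr_eq0 => /eqP <-.
rewrite -[u]vsubmxK reduced_mx_mul scale_col_mx => /eq_col_mx [eig_x eig_y].
set x := usubmx u in eig_x eig_y; set y := dsubmx u in eig_x eig_y.
set th := (1 + mu)^-1; set T := th *: (block_ind *m sel_mx sg).
have th_ge0 : 0 <= th by rewrite invr_ge0 addr_ge0.
have th_le1 : th <= 1 by rewrite invf_le1 ?lerDl // ltr_wpDr.
have sel_le1 k : mxnorm_inf (cmx (th *: sel_blk sg k)) <= 1.
  by apply: mxnorm_inf_sel_blk; rewrite th_ge0 th_le1.
have [loop_unit hurwitz] := robustly_stable sel_le1.
rewrite -map_mxdiag ?raddf0 // mxdiag_sel_blk -/T in loop_unit hurwitz.
set z := C *m x + F *m (block_ind *m y).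
have Pz : sel_mx sg *m z = (1 + mu) *: y.
  by move/eqP: eig_y; rewrite subr_eq => /eqP ->; rewrite scalerDl scale1r addrC.
have Tz : T *m z = block_ind *m y.
  by rewrite -scalemxAl -mulmxA Pz scalemxAr scalerA mulVf ?scale1r // gt_eqF ?ltr_wpDr.
have loop : z = C *m x + F *m (T *m z) by rewrite Tz.
case: (eqVneq x 0) => [x0 | x_neq0].
  have real_unit : (1%:M - F *m T) \in unitmx.
    by rewrite -(map_unitmx (real_complex R)) map_mxB map_mx1 map_mxM.
  have z0 : z = 0.
    have Lz : (1%:M - F *m T) *m z = C *m x.
      by rewrite mulmxBl mul1mx -mulmxA {1}loop addrK.
    by rewrite -(mulKmx real_unit z) Lz x0 !mulmx0.
  move/eqP: Pz; rewrite z0 mulmx0 eq_sym scaler_eq0 gt_eqF ?ltr_wpDr //= => /eqP y0.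
  by move: u_neq0; rewrite -[u]vsubmxK -/x -/y x0 y0 col_mx0 eqxx.
suff /hurwitz : eigenvalue (cmx A + cmx E *m cmx T *m invmx (1%:M - cmx F *m cmx T)
                              *m cmx C) ((mu%:C)%C) by rewrite ltNge mu_ge0.
apply/(closed_loop_eigenvalueP _ _ _ _ loop_unit); exists (cmx x), (cmx z); split.
- by rewrite -(cmx0 R) (inj_eq (@cmx_inj _ _ _)).
- by rewrite -!cmxM -cmxD -loop.
- by rewrite -!cmxM -cmxD Tz eig_x cmxZ.
Qed.

Definition reduced_sol sg : 'cV[R]_(n + N) := invmx (- reduced_mx sg) *m const_mx 1.

Lemma reduced_mx_sol sg : reduced_mx sg *m reduced_sol sg = - const_mx 1.
Proof.
have : (- reduced_mx sg) \in unitmx.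
  by rewrite -sub0r -(raddf0 (@scalar_mx R (n + N))) reduced_shift_unit.
by move=> unit_opp; rewrite -[reduced_mx sg]opprK mulNmx mulmxA mulmxV ?mul1mx.
Qed.

Lemma reduced_sol_gt0 sg j : 0 < reduced_sol sg j 0.
Proof.
have sol_ge0 : forall i, 0 <= reduced_sol sg i 0.
  apply: (metzler_monotone_opp (reduced_mx_metzler sg)) => [mu|i].
    exact: reduced_shift_unit.
  by rewrite mulNmx reduced_mx_sol opprK mxE.
apply: (metzler_mul_lt0_pos (reduced_mx_metzler sg)) => //.
by rewrite reduced_mx_sol !mxE oppr_lt0.
Qed.

Lemma reduced_sol_rows sg :
  let lam := usubmx (reduced_sol sg) in let dv := dsubmx (reduced_sol sg) in
  A *m lam + E *m (block_ind *m dv) = - const_mx 1 /\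
  sel_mx sg *m (C *m lam + F *m (block_ind *m dv)) - dv = - const_mx 1.
Proof.
apply: eq_col_mx.
by rewrite -reduced_mx_mul vsubmxK reduced_mx_sol -opp_col_mx col_mx_const.
Qed.

Definition sol_mass sg := \sum_i reduced_sol sg i 0.

Definition switch_sel (sg : selection) (s : 'I_q) : selection :=
  [ffun k => if k == tagnat.sig1 s then inord (tagnat.sig2 s) else sg k].

(* With sg' := switch_sel sg s, the hypothesis gives M_sg' (u_sg' - u_sg) <= 0
   with a negative entry at block sig1 s; hence u_sg' >= u_sg, strictly there. *)
Lemma sol_mass_switch sg s :
  let lam := usubmx (reduced_sol sg) in let dv := dsubmx (reduced_sol sg) in
  dv (tagnat.sig1 s) 0 <= (C *m lam + F *m (block_ind *m dv)) s 0 ->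
  sol_mass sg < sol_mass (switch_sel sg s).
Proof.
move=> lam dv row_ge; have [upper lower] := reduced_sol_rows sg.
set k := tagnat.sig1 s in row_ge; set sg' := switch_sel sg s.
set z := C *m lam + F *m (block_ind *m dv) in row_ge lower.
have sel_s : tagnat.sig2 s = sg' k :> nat.
  by rewrite ffunE eqxx inordK // sig2_ltS.
have sel_other k' : k' != k -> sg' k' = sg k' by move=> neq; rewrite ffunE (negbTE neq).
set del := reduced_sol sg' - reduced_sol sg.
have Mdel i : (reduced_mx sg' *m del) i 0 =
    if i == rshift n k then - 1 - (z s 0 - dv k 0) else 0.
  rewrite mulmxBr reduced_mx_sol -[reduced_sol sg]vsubmxK reduced_mx_mul -/lam -/dv.
  have opp1E a (r : 'I_a) : (- const_mx 1 : 'cV[R]_a) r 0 = -1 by rewrite !mxE.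
  rewrite -/z mx_entryB opp1E; case: (split_ordP i) => {}i ->.
    by rewrite eq_shift col_mxEu upper opp1E subrr.
  rewrite eq_shift col_mxEd mx_entryB; case: (eqVneq i k) => [->|neq].
    by rewrite sel_mx_mul_sel.
  by rewrite (sel_mx_mul_eq (sg := sg)) ?sel_other // -mx_entryB lower opp1E subrr.
have del_ge0 : forall i, 0 <= del i 0.
  apply: (metzler_monotone_opp (reduced_mx_metzler sg')) => [mu|i].
    exact: reduced_shift_unit.
  rewrite mulNmx mxE Mdel oppr_ge0; case: ifP => // _; lra.
have del_k : 0 < del (rshift n k) 0.
  apply: (metzler_mul_lt0_pos (reduced_mx_metzler sg')) => //.
  rewrite Mdel eqxx; lra.
rewrite /sol_mass -(subrK (reduced_sol sg) (reduced_sol sg')) -/del.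
under [X in _ < X]eq_bigr do rewrite mxE.
rewrite big_split /= ltrDr (bigD1 (rshift n k)) //=.
by apply: lt_le_trans del_k _; rewrite lerDl sumr_ge0.
Qed.

Lemma weights_of_robust_stability : exists (lam : 'cV[R]_n) (d : 'I_N -> R),
  [/\ forall j, 0 < lam j 0, forall k, 0 < d k,
      forall j, (A *m lam + E *m block_const d) j 0 < 0 &
      forall s, (C *m lam + F *m block_const d) s 0 < block_const d s 0].
Proof.
have [sg _ mass_max] := @arg_maxP _ _ _ ([ffun=> ord0] : selection) predT sol_mass isT.
have [upper _] := reduced_sol_rows sg.
exists (usubmx (reduced_sol sg)), (fun k => dsubmx (reduced_sol sg) k 0).
rewrite -block_ind_mul; split=> [j|k|j|s].
- by rewrite mxE reduced_sol_gt0.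
- by rewrite mxE reduced_sol_gt0.
- by rewrite upper !mxE oppr_lt0.
rewrite block_ind_mul block_constE -block_ind_mul ltNge; apply/negP => row_ge.
by have := mass_max (switch_sel sg s) isT; rewrite /= leNgt sol_mass_switch.
Qed.

End Necessity.

End BlockStructure.

Theorem theorem5 (R : realType) (n N : nat) (qs : 'I_N -> nat)
    (A : 'M[R]_n) (E : 'M[R]_(n, \sum_(k < N) qs k))
    (C : 'M[R]_(\sum_(k < N) qs k, n)) (F : 'M[R]_(\sum_(k < N) qs k)) :
  metzler A -> nonneg_mx E -> nonneg_mx C -> nonneg_mx F ->
  ((forall Db : forall k : 'I_N, 'M[R[i]]_(qs k),
      (forall k, mxnorm_inf (Db k) <= 1) ->
      uss_stable A E C F (\mxdiag_(k < N) Db k))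
   <->
   (exists (lam : 'cV[R]_n) (d : 'I_N -> R),
      (forall j, 0 < lam j 0) /\ (forall k, 0 < d k) /\
      forall r, (block_mx A E C (F - 1%:M) *m
                 col_mx lam ((\mxdiag_(k < N) ((d k)%:M : 'M[R]_(qs k)))
                             *m const_mx 1)) r 0 < 0)).
Proof.
move=> A_metzler E_ge0 C_ge0 F_ge0; split=> [stable | [lam [d [lam_gt0 [d_gt0]]]]].
  have [lam [d [lam_gt0 d_gt0 upper lower]]] :=
    weights_of_robust_stability A_metzler E_ge0 C_ge0 F_ge0 stable.
  by exists lam, d; do 2!split=> //; apply/lmi_rowsP.
move/lmi_rowsP => [upper lower] Db Db_le1.
apply: (uss_stable_of_weights A_metzler E_ge0 C_ge0 F_ge0 lam_gt0 _ upper lower).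
  by move=> s; rewrite block_constE.
by apply: mxdiag_nonexpansive => // k; exact: ltW.
Qed.
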